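(* Let $\{D_i\}_{i\in\mathbb{Z}}$ be non-negative integers and $d\in\mathbb{N}$. Set $D_i^d=\max\{D_i-d,0\}$ and, for $A\subset\mathbb{Z}$, $b(A)=\sum_{i\in A}D_i^d$. Then every finite cluster $C$ of claimed vertices on level $d$ satisfies $b(C)\le |C|-1$.
   Context: A vertex $i\in\mathbb{Z}$ is claimed on level $d$ iff $\sum_{k=i-m}^{i+m}D_k^d\ge m$ for some integer $m\ge1$. A cluster of claimed vertices is a set of consecutive vertices $\{i,\dots,i+n\}$ all of which are claimed, while $i-1$ and $i+n+1$ are not claimed. *)

From Stdlib Require Import ZArith Arith Lia.
Open Scope Z_scope.

(* D_i^d = max(D_i - d, 0) ; truncated subtraction on nat is exactly this. *)
Definition Dd (D : Z -> nat) (d : nat) (i : Z) : nat := (D i - d)%nat.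

Fixpoint sum_from (f : Z -> nat) (a : Z) (len : nat) : nat :=
  match len with
  | O => 0%nat
  | S l => (f a + sum_from f (a + 1) l)%nat
  end.

Definition claimed (D : Z -> nat) (d : nat) (i : Z) : Prop :=
  exists m : nat, (1 <= m)%nat /\
    (m <= sum_from (Dd D d) (i - Z.of_nat m) (2 * m + 1))%nat.

Definition cluster (D : Z -> nat) (d : nat) (i : Z) (n : nat) : Prop :=
  (forall j : nat, (j <= n)%nat -> claimed D d (i + Z.of_nat j)) /\
  ~ claimed D d (i - 1) /\
  ~ claimed D d (i + Z.of_nat n + 1).

Definition b_interval (D : Z -> nat) (d : nat) (i : Z) (n : nat) : nat :=
  sum_from (Dd D d) i (S n).

(* If the cluster {i, ..., i+n} carried weight at least n+1, then the window of
   radius m = n+1 around the left neighbour i-1 would contain the whole cluster,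
   so i-1 would be claimed, contradicting the maximality of the cluster. *)

From Stdlib Require Import ZArith Arith Lia.

Lemma sum_from_add (f : Z -> nat) (k : nat) : forall (a : Z) (l : nat),
  sum_from f a (k + l) = (sum_from f a k + sum_from f (a + Z.of_nat k) l)%nat.
Proof.
  induction k as [|k IH]; intros a l; simpl.
  - rewrite Z.add_0_r; reflexivity.
  - rewrite IH.
    replace (a + 1 + Z.of_nat k) with (a + Z.pos (Pos.of_succ_nat k)) by lia.
    lia.
Qed.

Lemma sum_from_le_suffix (f : Z -> nat) (a : Z) (k l : nat) :
  (sum_from f (a + Z.of_nat k) l <= sum_from f a (k + l))%nat.
Proof. rewrite sum_from_add; lia. Qed.

Lemma claimed_left_of_heavy_block (D : Z -> nat) (d : nat) (i : Z) (n : nat) :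
  (S n <= b_interval D d i n)%nat -> claimed D d (i - 1).
Proof.
  intros Hheavy. exists (S n). split; [lia|].
  replace (2 * S n + 1)%nat with (S (S n) + S n)%nat by lia.
  eapply Nat.le_trans; [exact Hheavy|].
  unfold b_interval.
  replace i with (i - 1 - Z.of_nat (S n) + Z.of_nat (S (S n))) at 1 by lia.
  apply sum_from_le_suffix.
Qed.

Theorem lemma3p2 (D : Z -> nat) (d : nat) (i : Z) (n : nat) :
  cluster D d i n -> (b_interval D d i n <= S n - 1)%nat.
Proof.
  intros [_ [Hleft_unclaimed _]].
  destruct (Nat.le_gt_cases (b_interval D d i n) (S n - 1)) as [Hlight|Hheavy];
    [exact Hlight|].
  exfalso. apply Hleft_unclaimed.
  apply (claimed_left_of_heavy_block D d i n). lia.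
Qed.
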